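(* Let an $(n,k)$ binary linear block code encode information words $\boldsymbol{b}=(b_1,\dots,b_k)\in\{0,1\}^k$ into codewords; list all $2^k$ information words as $\boldsymbol{b}^{(1)},\dots,\boldsymbol{b}^{(2^k)}$ and let $\boldsymbol{c}^{(j)}\in\{0,1\}^n$ be the codeword encoding $\boldsymbol{b}^{(j)}$. Consider the three-layer network with $n$ input neurons, $2^k$ hidden neurons and $k$ output neurons, with zero biases, defined as follows: the $n\times 2^k$ binary weight matrix $\boldsymbol{W}_1$ has $j$-th column $\boldsymbol{c}^{(j)}$; the $2^k\times k$ binary weight matrix $\boldsymbol{W}_2$ has $j$-th row $\boldsymbol{b}^{(j)}$; the hidden layer applies the scaled softmax with $\alpha=2/\sigma^2$, i.e. for input $\boldsymbol{r}\in\mathbb{R}^n$ (a row vector) the hidden output is $\boldsymbol{h}$ with $h_j=\exp(\alpha(\boldsymbol{r}\boldsymbol{W}_1)_j)/\sum_{l=1}^{2^k}\exp(\alpha(\boldsymbol{r}\boldsymbol{W}_1)_l)$; and the output layer computes $\boldsymbol{v}=\boldsymbol{h}\boldsymbol{W}_2\in\mathbb{R}^k$. The decoder sets $\hat{b}_i=1$ if $v_i>1/2$ and $\hat{b}_i=0$ if $v_i<1/2$ (either value if $v_i=1/2$). Then this decoder is bit-wise optimal: for every $\boldsymbol{r}$ and every $i=1,\dots,k$, $\hat{b}_i\in\mathrm{argmax}_{\beta\in\{0,1\}}\,p(\boldsymbol{r}\mid b_i=\beta)$. No training is required.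
   Context: Transmission model: information words $\boldsymbol{b}$ are uniformly distributed on $\{0,1\}^k$ (so all codewords are equally likely); the codeword $\boldsymbol{c}$ is mapped by BPSK to $\boldsymbol{s}$ with $s_i=2c_i-1$; the channel is additive white Gaussian noise, $\boldsymbol{r}=\boldsymbol{s}+\boldsymbol{w}$ with $w_1,\dots,w_n$ i.i.d. $\mathcal{N}(0,\sigma^2)$, so $p(\boldsymbol{r}\mid\boldsymbol{s})=\prod_{i=1}^n (2\pi\sigma^2)^{-1/2}\exp(-(r_i-s_i)^2/(2\sigma^2))$, and $p(\boldsymbol{r}\mid b_i=\beta)$ is the conditional density of $\boldsymbol{r}$ given that the $i$-th information bit equals $\beta$. A decoder is bit-wise optimal if each estimated bit $\hat{b}_i$ maximizes $p(\boldsymbol{r}\mid b_i=\beta)$ over $\beta\in\{0,1\}$ (this minimizes the bit error rate). *)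

From HB Require Import structures.
From mathcomp Require Import all_boot all_order all_algebra.
From mathcomp Require Import all_classical all_reals all_analysis.
Set Implicit Arguments. Unset Strict Implicit. Unset Printing Implicit Defensive.
Import Order.TTheory GRing.Theory Num.Theory.
Local Open Scope ring_scope.

Section Decoding.
Variables (R : realType) (k n : nat).

Definition bitR (x : 'F_2) : R := (x : nat)%:R.

Definition encode (G : 'M['F_2]_(k, n)) (b : 'rV['F_2]_k) : 'rV['F_2]_n := b *m G.

Definition bpsk (c : 'rV['F_2]_n) : 'rV[R]_n := \row_i (2 * bitR (c 0 i) - 1).

Definition awgn_density (sigma : R) (r s : 'rV[R]_n) : R :=
  \prod_(i < n) ((Num.sqrt (2 * pi * sigma ^+ 2))^-1 *
                 expR (- (r 0 i - s 0 i) ^+ 2 / (2 * sigma ^+ 2))).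

(* p(r | b_i = beta), information words uniformly distributed:
   average of p(r | s(c(b))) over the information words b with b_i = beta *)
Definition cond_density (G : 'M['F_2]_(k, n)) (sigma : R) (r : 'rV[R]_n)
    (i : 'I_k) (beta : 'F_2) : R :=
  (\sum_(b : 'rV['F_2]_k | b 0 i == beta) awgn_density sigma r (bpsk (encode G b)))
  / (#|[pred b : 'rV['F_2]_k | b 0 i == beta]|)%:R.

(* the network; e j = b^(j) is the listing of all 2^k information words *)
Definition W1 (G : 'M['F_2]_(k, n)) (e : 'I_(2 ^ k) -> 'rV['F_2]_k) : 'M[R]_(n, 2 ^ k) :=
  \matrix_(l, j) bitR (encode G (e j) 0 l).

Definition W2 (e : 'I_(2 ^ k) -> 'rV['F_2]_k) : 'M[R]_(2 ^ k, k) :=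
  \matrix_(j, i) bitR (e j 0 i).

Definition hidden (alpha : R) (G : 'M['F_2]_(k, n)) (e : 'I_(2 ^ k) -> 'rV['F_2]_k)
    (r : 'rV[R]_n) : 'rV[R]_(2 ^ k) :=
  let z := r *m W1 G e in
  \row_j (expR (alpha * z 0 j) / \sum_(l < 2 ^ k) expR (alpha * z 0 l)).

Definition nn_output (sigma : R) (G : 'M['F_2]_(k, n)) (e : 'I_(2 ^ k) -> 'rV['F_2]_k)
    (r : 'rV[R]_n) : 'rV[R]_k :=
  hidden (2 / sigma ^+ 2) G e r *m W2 e.

Definition nn_decision (v : 'rV[R]_k) (bhat : 'rV['F_2]_k) : Prop :=
  forall i : 'I_k, (2^-1 < v 0 i -> bhat 0 i = 1) /\ (v 0 i < 2^-1 -> bhat 0 i = 0).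

End Decoding.

From HB Require Import structures.
From mathcomp Require Import all_boot all_order all_algebra.
From mathcomp Require Import all_classical all_reals all_analysis.
From mathcomp Require Import ring lra.
Import Order.TTheory GRing.Theory Num.Theory.
Set Implicit Arguments. Unset Strict Implicit.
Local Open Scope ring_scope.

(* Since c_l^2 = c_l, the AWGN likelihood of a BPSK codeword c factors as
   K(r) * exp(alpha <r, c>) with alpha = 2 / sigma^2 and K(r) independent of c.
   Hence p(r | b_i = beta) is proportional to the partial sum S_beta of the
   weights exp(alpha <r, c(b)>) over the information words with b_i = beta (the
   proportionality factor does not depend on beta, as both classes of words have
   the same size). The softmax layer produces exactly these weights, normalised,
   and W2 picks out the words with b_i = 1, so v_i = S_1 / (S_0 + S_1); the
   threshold 1/2 on v_i therefore compares S_1 with S_0. *)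

Lemma F2_cases (x : 'F_2) : x = 0 \/ x = 1.
Proof. by case: x => [[|[|m]] Hm]; [left|right|by []]; apply: val_inj. Qed.

Section Likelihood.
Variables (R : realType) (n : nat).

Lemma bitR0 : bitR R 0 = 0. Proof. by []. Qed.
Lemma bitR1 : bitR R 1 = 1. Proof. by []. Qed.

Definition corr (r : 'rV[R]_n) (c : 'rV['F_2]_n) : R :=
  \sum_l r 0 l * bitR R (c 0 l).

Lemma awgn_density_bpsk (sigma : R) (r : 'rV[R]_n) (c : 'rV['F_2]_n) :
  awgn_density sigma r (bpsk R c) =
  awgn_density sigma r (bpsk R 0) * expR (2 / sigma ^+ 2 * corr r c).
Proof.
rewrite /awgn_density /corr mulr_sumr expR_sum -big_split /=.
apply: eq_bigr => l _; rewrite !mxE -[RHS]mulrA -expRD; congr (_ * expR _).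
have [->|s0] := eqVneq sigma 0.
  by rewrite expr0n /= !(mulr0, invr0, oppr0, mul0r, add0r).
by case: (F2_cases (c 0 l)) => ->; rewrite ?bitR0 ?bitR1; field.
Qed.

Lemma awgn_density_ge0 (sigma : R) (r s : 'rV[R]_n) : 0 <= awgn_density sigma r s.
Proof.
by apply: prodr_ge0 => l _; rewrite mulr_ge0 ?expR_ge0 ?invr_ge0 ?sqrtr_ge0.
Qed.

End Likelihood.

Section BitMarginal.
Variables (R : numDomainType) (k : nat) (i : 'I_k).

Definition bit_marginal (E : 'rV['F_2]_k -> R) (beta : 'F_2) : R :=
  \sum_(b : 'rV['F_2]_k | b 0 i == beta) E b.

Lemma sum_bit_marginal (E : 'rV['F_2]_k -> R) :
  \sum_b E b = bit_marginal E 0 + bit_marginal E 1.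
Proof.
rewrite (bigID (fun b : 'rV['F_2]_k => b 0 i == 0)) /=; congr (_ + _).
by apply: eq_bigl => b; case: (F2_cases (b 0 i)) => ->.
Qed.

Lemma sum_bit_marginal_gt0 (E : 'rV['F_2]_k -> R) :
  (forall b, 0 < E b) -> 0 < bit_marginal E 0 + bit_marginal E 1.
Proof.
move=> E_gt0; rewrite -sum_bit_marginal (bigD1 0) //=.
by rewrite ltr_wpDr ?E_gt0 // sumr_ge0 // => b _; rewrite ltW.
Qed.

(* Translation by the i-th unit vector swaps the two classes. *)
Lemma card_bit_eq (beta : 'F_2) :
  #|[pred b : 'rV['F_2]_k | b 0 i == beta]| =
  #|[pred b : 'rV['F_2]_k | b 0 i == 1]|.
Proof.
case: (F2_cases beta) => -> //.
rewrite -!sum1_card (reindex_inj (addIr (delta_mx 0 i))) /=.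
by apply: eq_bigl => b; rewrite !inE !mxE !eqxx; case: (F2_cases (b 0 i)) => ->.
Qed.

End BitMarginal.

Lemma bit_marginal_bitR (R : realType) (k : nat) (i : 'I_k)
    (E : 'rV['F_2]_k -> R) :
  \sum_b E b * bitR R (b 0 i) = bit_marginal i E 1.
Proof.
rewrite (bigID (fun b : 'rV['F_2]_k => b 0 i == 1)) /= [X in _ + X]big1 ?addr0.
  by apply: eq_bigr => b /eqP ->; rewrite bitR1 mulr1.
by move=> b; case: (F2_cases (b 0 i)) => -> // _; rewrite bitR0 mulr0.
Qed.

Lemma threshold_decision_argmax (R : realFieldType) (a : 'F_2 -> R) (x : 'F_2) :
    0 < a 0 + a 1 ->
    (2^-1 < a 1 / (a 0 + a 1) -> x = 1) -> (a 1 / (a 0 + a 1) < 2^-1 -> x = 0) ->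
  forall beta, a beta <= a x.
Proof.
move=> s_gt0 dec1 dec0 beta; rewrite leNgt; apply/negP => lt_ax.
case: (F2_cases beta) lt_ax => ->; case: (F2_cases x) => x_val;
  rewrite x_val ?ltxx // => lt_ax.
- have /dec0 : a 1 / (a 0 + a 1) < 2^-1 by rewrite ltr_pdivrMr //; lra.
  by rewrite x_val.
- have /dec1 : 2^-1 < a 1 / (a 0 + a 1) by rewrite ltr_pdivlMr //; lra.
  by rewrite x_val.
Qed.

Section Decoder.
Variables (R : realType) (k n : nat) (G : 'M['F_2]_(k, n)) (sigma : R).
Variables (e : 'I_(2 ^ k) -> 'rV['F_2]_k) (r : 'rV[R]_n) (i : 'I_k).

Let weight (b : 'rV['F_2]_k) : R := expR (2 / sigma ^+ 2 * corr r (encode G b)).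

Lemma cond_density_bit_marginal (beta : 'F_2) :
  cond_density G sigma r i beta =
  awgn_density sigma r (bpsk R 0) / (#|[pred b : 'rV['F_2]_k | b 0 i == 1]|)%:R
  * bit_marginal i weight beta.
Proof.
rewrite /cond_density card_bit_eq [RHS]mulrAC mulr_sumr; congr (_ / _).
by apply: eq_bigr => b _; rewrite awgn_density_bpsk.
Qed.

Lemma W1_corr (j : 'I_(2 ^ k)) :
  \sum_l r 0 l * W1 R G e l j = corr r (encode G (e j)).
Proof. by apply: eq_bigr => l _; rewrite mxE. Qed.

Lemma nn_output_bit_marginal : bijective e ->
  nn_output sigma G e r 0 i =
  bit_marginal i weight 1 / (bit_marginal i weight 0 + bit_marginal i weight 1).
Proof.
move=> e_bij; have reindex_e (F : 'rV['F_2]_k -> R) : \sum_j F (e j) = \sum_b F b.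
  by rewrite (reindex e) //; exact: onW_bij.
rewrite -sum_bit_marginal -bit_marginal_bitR -(reindex_e weight).
rewrite -(reindex_e (fun b => weight b * bitR R (b 0 i))) mulr_suml mxE.
apply: eq_bigr => j _; rewrite !mxE mulrAC W1_corr; congr (_ / _).
by apply: eq_bigr => l _; rewrite mxE W1_corr.
Qed.

End Decoder.

Theorem theorem2 (R : realType) (k n : nat) (G : 'M['F_2]_(k, n))
    (hG : \rank G = k)
    (e : 'I_(2 ^ k) -> 'rV['F_2]_k) (he : bijective e)
    (sigma : R) (hsigma : 0 < sigma)
    (r : 'rV[R]_n) (bhat : 'rV['F_2]_k) :
  nn_decision (nn_output sigma G e r) bhat ->
  forall (i : 'I_k) (beta : 'F_2),
    cond_density G sigma r i beta <= cond_density G sigma r i (bhat 0 i).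
Proof.
move=> dec i beta; have [] := dec i.
rewrite nn_output_bit_marginal // => dec1 dec0.
rewrite !cond_density_bit_marginal ler_wpM2l ?divr_ge0 ?awgn_density_ge0 //.
set w := bit_marginal i _.
apply: threshold_decision_argmax; [|exact: dec1|exact: dec0].
by apply: sum_bit_marginal_gt0 => b; exact: expR_gt0.
Qed.
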